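(* Let $A\subset\mathbb{Z}^d$ be finite with $\mathbb{Z}$-linear span $\mathbb{Z}^d$, $f=\bigoplus_{i\in A}p_i\odot w^i$ a tropical polynomial with support $A$, and $q\in\mathcal{T}(f)$ a point lying in the relative interior of a cell $\sigma^*$ of $\mathcal{T}(f)$ whose dual marked cell $\sigma$ is a pyramid. Then $q$ is not a singular point of $\mathcal{T}(f)$. In particular, if the marked coherent subdivision $\Pi_p$ is a triangulation, then $\mathcal{T}(f)$ is non-singular.
   Context: $\mathbb{K}$ is an algebraically closed field of characteristic $0$ with a rank-one non-archimedean valuation $val$ whose residue field has characteristic $0$. Tropical operations $\oplus=\min$, $\odot=+$; $f(w)=\min_{i\in A}(p_i+\langle i,w\rangle)$, all $p_i\in\mathbb{R}$; $\mathcal{T}(f)$ is the set of $w$ where this minimum is attained for at least two distinct $i$. A point $q\in\mathcal{T}(f)$ is singular if there exist $F=\sum_{i\in A}a_ix^i$ over $\mathbb{K}$ with $val(a_i)=p_i$ for all $i$ and $b\in(\mathbb{K}^* )^d$ with $val(b)=q$ such that $F(b)=0$ and all $\partial F/\partial x_j(b)=0$; $\mathcal{T}(f)$ is non-singular if it has no singular point. For $q\in\mathbb{R}^d$ let $\sigma_q=\{i\in A: p_i+\langle i,q\rangle=f(q)\}$. The marked coherent subdivision $\Pi_p$ of the convex hull of $A$ is the collection of the sets $\sigma_q$, $q\in\mathbb{R}^d$ (its marked cells). For a marked cell $\sigma$, its dual cell $\sigma^*$ is the closure of $\{q:\sigma_q=\sigma\}$, and $q$ lies in the relative interior of $\sigma^*$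 iff $\sigma_q=\sigma$. A finite set $\sigma\subset\mathbb{R}^d$ is a pyramid if some $i\in\sigma$ does not lie in the affine span of $\sigma\setminus\{i\}$. $\Pi_p$ is a triangulation if every marked cell is affinely independent. *)

From HB Require Import structures.
From mathcomp Require Import all_boot all_order all_algebra.
From mathcomp Require Import reals.
Set Implicit Arguments. Unset Strict Implicit. Unset Printing Implicit Defensive.
Import Order.TTheory GRing.Theory Num.Theory.
Local Open Scope ring_scope.

(* A rank-one (real-valued) non-archimedean valuation on K, given on K^*
   (val 0 = +oo is implicit: the value of val at 0 is irrelevant). *)
Definition is_nonarch_valuation (R : realType) (K : fieldType) (val : K -> R) :=
  (forall x y : K, x != 0 -> y != 0 -> val (x * y) = val x + val y) /\
  (forall x y : K, x != 0 -> y != 0 -> x + y != 0 ->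
      Num.min (val x) (val y) <= val (x + y)).

(* The residue field O/m has characteristic 0, where
   O = {x | x = 0 \/ val x >= 0},  m = {x | x = 0 \/ val x > 0}:
   for every n >= 1, n*1 does not lie in the maximal ideal m. *)
Definition residue_char0 (R : realType) (K : fieldType) (val : K -> R) :=
  forall n : nat, (0 < n)%N -> ~ ((n%:R : K) = 0 \/ 0 < val (n%:R : K)).

Definition intvR (R : realType) (d : nat) (i : 'rV[int]_d) : 'rV[R]_d :=
  map_mx (fun z : int => z%:~R) i.

Definition Zspan_full (d : nat) (A : seq 'rV[int]_d) :=
  forall v : 'rV[int]_d, exists c : 'rV[int]_d -> int,
    v = \sum_(i <- A) c i *: i.

Definition in_affine_span (R : realType) (d : nat) (S : seq 'rV[int]_d)
    (x : 'rV[int]_d) :=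
  exists c : 'rV[int]_d -> R,
    \sum_(s <- S) c s = 1 /\ intvR R x = \sum_(s <- S) c s *: intvR R s.

Definition pyramid (R : realType) (d : nat) (sigma : seq 'rV[int]_d) :=
  exists2 i, i \in sigma & ~ in_affine_span R [seq j <- sigma | j != i] i.

Definition aff_indep (R : realType) (d : nat) (sigma : seq 'rV[int]_d) :=
  forall c : 'rV[int]_d -> R,
    \sum_(s <- sigma) c s = 0 -> \sum_(s <- sigma) c s *: intvR R s = 0 ->
    forall s, s \in sigma -> c s = 0.

Definition trop_term (R : realType) (d : nat) (p : 'rV[int]_d -> R)
    (i : 'rV[int]_d) (w : 'rV[R]_d) : R :=
  p i + \sum_(j < d) (i 0 j)%:~R * w 0 j.

Definition sigma_q (R : realType) (d : nat) (A : seq 'rV[int]_d)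
    (p : 'rV[int]_d -> R) (q : 'rV[R]_d) : seq 'rV[int]_d :=
  [seq i <- A | all (fun j => trop_term p i q <= trop_term p j q) A].

Definition in_trop_hyp (R : realType) (d : nat) (A : seq 'rV[int]_d)
    (p : 'rV[int]_d -> R) (q : 'rV[R]_d) :=
  exists i j, [/\ i \in sigma_q A p q, j \in sigma_q A p q & i != j].

Definition is_triangulation (R : realType) (d : nat) (A : seq 'rV[int]_d)
    (p : 'rV[int]_d -> R) :=
  forall q : 'rV[R]_d, aff_indep R (sigma_q A p q).

Definition monom (K : fieldType) (d : nat) (b : 'rV[K]_d) (i : 'rV[int]_d) : K :=
  \prod_(k < d) (b 0 k) ^ (i 0 k).

Definition lpoly_eval (K : fieldType) (d : nat) (A : seq 'rV[int]_d)
    (a : 'rV[int]_d -> K) (b : 'rV[K]_d) : K :=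
  \sum_(i <- A) a i * monom b i.

Definition lpoly_deriv_eval (K : fieldType) (d : nat) (A : seq 'rV[int]_d)
    (a : 'rV[int]_d -> K) (j : 'I_d) (b : 'rV[K]_d) : K :=
  \sum_(i <- A) a i * (i 0 j)%:~R *
     \prod_(k < d) (b 0 k) ^ (i 0 k - (k == j)%:Z).

Definition singular_point (R : realType) (K : fieldType) (val : K -> R)
    (d : nat) (A : seq 'rV[int]_d) (p : 'rV[int]_d -> R) (q : 'rV[R]_d) :=
  in_trop_hyp A p q /\
  exists (a : 'rV[int]_d -> K) (b : 'rV[K]_d),
    [/\ forall i, i \in A -> a i != 0 /\ val (a i) = p i,
        forall k : 'I_d, b 0 k != 0 /\ val (b 0 k) = q 0 k,
        lpoly_eval A a b = 0 &
        forall j : 'I_d, lpoly_deriv_eval A a j b = 0].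

Definition trop_nonsingular (R : realType) (K : fieldType) (val : K -> R)
    (d : nat) (A : seq 'rV[int]_d) (p : 'rV[int]_d -> R) :=
  forall q : 'rV[R]_d, ~ singular_point val A p q.

From mathcomp Require Import all_boot all_order all_algebra.
From mathcomp Require Import reals.
From mathcomp Require Import lra ring.
Import Order.TTheory GRing.Theory Num.Theory.
Set Implicit Arguments. Unset Strict Implicit.
Local Open Scope ring_scope.

(* Suppose q is singular, witnessed by F = sum a_i x^i and b with val b = q.
   Euler's relations x_k dF/dx_k (b) = 0 together with F(b) = 0 give
   sum_i a_i l(i) b^i = 0 for every integer affine form l.  If sigma = sigma_q is
   a pyramid with apex i0, some such l vanishes on sigma \ {i0} but not at i0.
   The integers l(i) != 0 have valuation 0 because the residue field has
   characteristic 0, so the i0-term has valuation f(q), while every other nonzero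
   term comes from some i outside sigma and has valuation > f(q): the sum cannot
   vanish.  A triangulation has only affinely independent cells, and every point
   of an affinely independent cell is an apex. *)

Section Valuation.
Variables (R : realType) (K : fieldType) (val : K -> R).
Hypothesis hval : is_nonarch_valuation val.

Lemma valuationM (x y : K) : x != 0 -> y != 0 -> val (x * y) = val x + val y.
Proof. by case: hval => hM _; apply: hM. Qed.

Lemma valuation1 : val 1 = 0.
Proof.
by have := valuationM (oner_neq0 K) (oner_neq0 K); rewrite mulr1 => h; lra.
Qed.

Lemma valuationN (x : K) : x != 0 -> val (- x) = val x.
Proof.
have hN1 : (-1 : K) != 0 by rewrite oppr_eq0 oner_neq0.
have valN1 : val (-1) = 0.
  by have := valuationM hN1 hN1; rewrite mulrNN mulr1 valuation1 => h; lra.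
by move=> hx; rewrite -mulN1r valuationM // valN1 add0r.
Qed.

Lemma valuationV (x : K) : x != 0 -> val x^-1 = - val x.
Proof.
move=> hx; have := valuationM hx (invr_neq0 hx).
by rewrite mulfV // valuation1 => h; lra.
Qed.

Lemma valuationXn (x : K) (n : nat) : x != 0 -> val (x ^+ n) = n%:R * val x.
Proof.
move=> hx; elim: n => [|n IH]; first by rewrite expr0 valuation1 mul0r.
by rewrite exprS valuationM ?expf_neq0 // IH mulrSr mulrDl mul1r addrC.
Qed.

Lemma valuationXz (x : K) (z : int) : x != 0 -> val (x ^ z) = z%:~R * val x.
Proof.
move=> hx; case: z => n; first by rewrite -exprnP valuationXn.
by rewrite NegzE -exprnN valuationV ?expf_neq0 // valuationXn // mulrNz mulNr.
Qed.

Lemma monom_neq0 (d : nat) (b : 'rV[K]_d) (i : 'rV[int]_d) :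
  (forall k, b 0 k != 0) -> monom b i != 0.
Proof. by move=> hb; apply/prodf_neq0 => k _; apply: expfz_neq0. Qed.

Lemma valuation_monom (d : nat) (b : 'rV[K]_d) (q : 'rV[R]_d) (i : 'rV[int]_d) :
  (forall k, b 0 k != 0 /\ val (b 0 k) = q 0 k) ->
  val (monom b i) = \sum_(k < d) (i 0 k)%:~R * q 0 k.
Proof.
move=> hb; set m := monom b i.
suff : m != 0 /\ val m = \sum_(k < d) (i 0 k)%:~R * q 0 k by case.
apply: (big_ind2 (fun x y => x != 0 /\ val x = y))
  => [|x1 x2 y1 y2 [h1 <-] [h2 <-]|k _].
- by rewrite oner_neq0 valuation1.
- by rewrite mulf_neq0 // valuationM.
- by have [hk <-] := hb k; rewrite expfz_neq0 // valuationXz.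
Qed.

Lemma valuation_big_gt (I : Type) (r : seq I) (P : pred I) (F : I -> K) (v : R) :
  (forall i, P i -> F i = 0 \/ v < val (F i)) ->
  let s := \sum_(i <- r | P i) F i in s = 0 \/ (s != 0 /\ v < val s).
Proof.
move=> hF /=; apply: (big_ind (fun x => x = 0 \/ (x != 0 /\ v < val x))).
- by left.
- move=> x y [->|[hx vx]]; first by rewrite add0r.
  case=> [->|[hy vy]]; first by rewrite addr0; right.
  have [->|hxy] := eqVneq (x + y) 0; [by left | right; split=> //].
  case: hval => _ hmin; apply: lt_le_trans (hmin _ _ hx hy hxy).
  by rewrite lt_min vx vy.
- move=> i /hF [->|hv]; first by left.
  by have [->|hi] := eqVneq (F i) 0; [left | right].
Qed.

Lemma addr_dominant_neq0 (x : K) (I : Type) (r : seq I) (P : pred I)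
    (F : I -> K) :
  x != 0 -> (forall i, P i -> F i = 0 \/ val x < val (F i)) ->
  x + \sum_(i <- r | P i) F i != 0.
Proof.
move=> hx /(valuation_big_gt r) /= [->|[hs vs]]; first by rewrite addr0.
apply/eqP => /eqP; rewrite addr_eq0 => /eqP hxs.
by move: vs; rewrite hxs valuationN // ltxx.
Qed.

Hypothesis hres : residue_char0 val.

Lemma natr_neq0 (n : nat) : (0 < n)%N -> (n%:R : K) != 0.
Proof. by move=> hn; apply/eqP => h; apply: (hres hn); left. Qed.

Lemma valuation_natr (n : nat) : (0 < n)%N -> val (n%:R : K) = 0.
Proof.
move=> hn; have val_ge0 m : (0 < m)%N -> 0 <= val (m%:R : K).
  case: m => // m _; elim: m => [|m IH]; first by rewrite valuation1.
  case: hval => _ hmin.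
  have := hmin _ 1 (natr_neq0 (ltn0Sn m)) (oner_neq0 _).
  rewrite -mulrSr => /(_ (natr_neq0 (ltn0Sn _))); apply: le_trans.
  by rewrite le_min IH valuation1 lexx.
apply/eqP; rewrite eq_le val_ge0 // andbT leNgt; apply/negP => h.
by apply: (hres hn); right.
Qed.

Lemma intr_neq0 (z : int) : z != 0 -> (z%:~R : K) != 0.
Proof.
case: z => n hn; last by rewrite NegzE mulrNz oppr_eq0 natr_neq0.
by apply: natr_neq0; rewrite lt0n; apply: contra hn => /eqP ->.
Qed.

Lemma valuation_intr (z : int) : z != 0 -> val (z%:~R : K) = 0.
Proof.
case: z => n hn.
  by apply: valuation_natr; rewrite lt0n; apply: contra hn => /eqP ->.
by rewrite NegzE mulrNz valuationN ?natr_neq0 ?valuation_natr.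
Qed.

End Valuation.

Definition homog (d : nat) (i : 'rV[int]_d) : 'rV[int]_(1 + d) :=
  row_mx (const_mx 1) i.

Definition affine_form (d : nat) (z : 'I_(1 + d) -> int) (i : 'rV[int]_d) : int :=
  \sum_(m < 1 + d) homog i 0 m * z m.

Lemma affine_formE (d : nat) (z : 'I_(1 + d) -> int) (i : 'rV[int]_d) :
  affine_form z i = z (lshift d ord0) + \sum_(k < d) i 0 k * z (rshift 1 k).
Proof.
rewrite /affine_form big_split_ord big_ord1 /homog row_mxEl mxE mul1r.
by congr (_ + _); apply: eq_bigr => k _; rewrite row_mxEr.
Qed.

Section EulerRelation.
Variables (K : fieldType) (d : nat) (A : seq 'rV[int]_d).
Variables (a : 'rV[int]_d -> K) (b : 'rV[K]_d).
Hypothesis hb : forall k, b 0 k != 0.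

Lemma mul_deriv_monom (i : 'rV[int]_d) (j : 'I_d) :
  (\prod_(k < d) (b 0 k) ^ (i 0 k - (k == j)%:Z)) * b 0 j = monom b i.
Proof.
rewrite /monom (bigD1 j) //= [RHS](bigD1 j) //= eqxx -mulrA.
rewrite [_ * b 0 j]mulrC mulrA; congr (_ * _).
  by rewrite -[X in _ * X]expr1z -expfzDr // subrK.
by apply: eq_bigr => k /negbTE ->; rewrite subr0.
Qed.

Lemma euler_relation (j : 'I_d) :
  lpoly_deriv_eval A a j b = 0 ->
  \sum_(i <- A) a i * (i 0 j)%:~R * monom b i = 0.
Proof.
move=> hD; rewrite -[RHS](mul0r (b 0 j)) -[in RHS]hD /lpoly_deriv_eval mulr_suml.
by apply: eq_bigr => i _; rewrite -[RHS]mulrA mul_deriv_monom.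
Qed.

Lemma affine_relation (z : 'I_(1 + d) -> int) :
  lpoly_eval A a b = 0 -> (forall j, lpoly_deriv_eval A a j b = 0) ->
  \sum_(i <- A) a i * (affine_form z i)%:~R * monom b i = 0.
Proof.
move=> hF hD.
transitivity ((z (lshift d ord0))%:~R * lpoly_eval A a b +
  \sum_(k < d) (z (rshift 1 k))%:~R *
      \sum_(i <- A) a i * (i 0 k)%:~R * monom b i); last first.
  by rewrite hF mulr0 add0r big1 // => k _; rewrite euler_relation ?mulr0.
rewrite /lpoly_eval mulr_sumr.
under [X in _ + X]eq_bigr => k _ do rewrite mulr_sumr.
rewrite [X in _ + X]exchange_big /= -big_split /=.
apply: eq_bigr => i _.
rewrite affine_formE rmorphD rmorph_sum /= mulrDr mulrDl mulrCA mulrA.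
congr (_ + _); rewrite mulr_sumr mulr_suml; apply: eq_bigr => k _.
by rewrite rmorphM /=; ring.
Qed.

End EulerRelation.

Lemma clear_denominators (n : nat) (c : 'I_n -> rat) :
  exists z : 'I_n -> int, exists2 D : int, D != 0 &
    forall m, (z m)%:~R = D%:~R * c m.
Proof.
exists (fun m => numq (c m) * \prod_(m' < n | m' != m) denq (c m')).
exists (\prod_(m < n) denq (c m)); first by apply/prodf_neq0 => m _.
by move=> m; rewrite [in RHS](bigD1 m) //= !intrM numqE; ring.
Qed.

Definition homogQ (d : nat) (i : 'rV[int]_d) : 'rV[rat]_(1 + d) :=
  map_mx (fun z : int => z%:~R) (homog i).

Lemma homogQ_lshift (d : nat) (i : 'rV[int]_d) : homogQ i 0 (lshift d ord0) = 1.
Proof. by rewrite mxE /homog row_mxEl mxE. Qed.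

Lemma homogQ_rshift (d : nat) (i : 'rV[int]_d) (k : 'I_d) :
  homogQ i 0 (rshift 1 k) = (i 0 k)%:~R.
Proof. by rewrite mxE /homog row_mxEr. Qed.

(* A rational linear dependency of the homogenized points maps under [ratr] to a
   real affine one; we work over [rat] so that separating forms can be made
   integral by [clear_denominators]. *)
Lemma not_in_affine_span_homogQ (R : realType) (d : nat) (S : seq 'rV[int]_d)
    (i0 : 'rV[int]_d) :
  uniq S -> ~ in_affine_span R S i0 ->
  ~~ (homogQ i0 <= \matrix_(r < size S) homogQ (nth 0 S r))%MS.
Proof.
move=> hS hna; apply/negP => /submxP [x hx]; apply: hna.
pose xs := [seq x 0 r | r <- enum 'I_(size S)].
exists (fun s => ratr (nth 0 xs (index s S))).
have sum_reindex (G : 'rV[int]_d -> R) :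
    \sum_(s <- S) ratr (nth 0 xs (index s S)) * G s =
    \sum_(r < size S) ratr (x 0 r) * G (nth 0 S r).
  rewrite (big_nth 0) big_mkord; apply: eq_bigr => r _.
  by rewrite index_uniq // (nth_map r) ?size_enum_ord // nth_ord_enum.
have coord m : ratr (homogQ i0 0 m) =
    \sum_(r < size S) ratr (x 0 r) * @ratr R (homogQ (nth 0 S r) 0 m).
  by rewrite hx mxE rmorph_sum; apply: eq_bigr => r _; rewrite mxE rmorphM.
split.
  transitivity (\sum_(s <- S)
      ratr (nth 0 xs (index s S)) * @ratr R (homogQ s 0 (lshift d ord0))).
    by apply: eq_bigr => s _; rewrite homogQ_lshift rmorph1 mulr1.
  rewrite (sum_reindex (fun s => ratr (homogQ s 0 _))) -coord.
  by rewrite homogQ_lshift rmorph1.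
apply/rowP => k; rewrite summxE mxE -ratr_int -homogQ_rshift coord
  -(sum_reindex (fun s => ratr (homogQ s 0 _))).
by apply: eq_bigr => s _; rewrite homogQ_rshift ratr_int !mxE.
Qed.

Lemma not_submx_separation (F : fieldType) (m n : nat) (M : 'M[F]_(m, n))
    (v : 'rV[F]_n) :
  ~~ (v <= M)%MS ->
  exists c : 'I_n -> F,
    (forall r, \sum_l M r l * c l = 0) /\ \sum_l v 0 l * c l != 0.
Proof.
rewrite submxE => hv.
have [k hk] : exists k, (v *m cokermx M) 0 k != 0.
  apply/existsP; apply: contraNT hv => /existsPn vC0.
  by apply/eqP/rowP => k; rewrite [RHS]mxE; apply/eqP/negbNE/vC0.
exists (fun l => cokermx M l k); split; last by move: hk; rewrite mxE.
move=> r; have := congr1 (fun B : 'M_(m, n) => B r k) (mulmx_coker M).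
by rewrite !mxE.
Qed.

Lemma affine_separation (R : realType) (d : nat) (S : seq 'rV[int]_d)
    (i0 : 'rV[int]_d) :
  uniq S -> ~ in_affine_span R S i0 ->
  exists z : 'I_(1 + d) -> int,
    (forall j, j \in S -> affine_form z j = 0) /\ affine_form z i0 != 0.
Proof.
move=> hS /(not_in_affine_span_homogQ hS) /not_submx_separation [c [cS ci0]].
have [z [D D_neq0 zE]] := clear_denominators c.
have form_ratE j : (affine_form z j)%:~R = D%:~R * \sum_l homogQ j 0 l * c l.
  rewrite rmorph_sum mulr_sumr; apply: eq_bigr => l _.
  by rewrite rmorphM /= zE /homogQ [X in _ = _ * (X * _)]mxE; ring.
exists z; split; last by rewrite -(intr_eq0 rat) form_ratE mulf_neq0 ?intr_eq0.
move=> j jS; apply/eqP; rewrite -(intr_eq0 rat) form_ratE.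
have := cS (Ordinal (etrans (index_mem j S) jS)).
under eq_bigr do rewrite mxE /= nth_index //.
by move=> ->; rewrite mulr0.
Qed.

Lemma trop_term_lt_notin (R : realType) (d : nat) (A : seq 'rV[int]_d)
    (p : 'rV[int]_d -> R) (q : 'rV[R]_d) (i0 i : 'rV[int]_d) :
  i0 \in sigma_q A p q -> i \in A -> i \notin sigma_q A p q ->
  trop_term p i0 q < trop_term p i q.
Proof.
rewrite !mem_filter => /andP [/allP i0_min _] iA.
rewrite iA andbT => /allPn [j jA]; rewrite -ltNge.
exact/le_lt_trans/i0_min.
Qed.

Lemma pyramid_not_singular (R : realType) (K : fieldType) (val : K -> R)
    (hval : is_nonarch_valuation val) (hres : residue_char0 val)
    (d : nat) (A : seq 'rV[int]_d) (p : 'rV[int]_d -> R) (q : 'rV[R]_d) :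
  uniq A -> pyramid R (sigma_q A p q) -> ~ singular_point val A p q.
Proof.
move=> A_uniq [i0 i0_sigma apex] [_ [a [b [ha hb hF hD]]]].
have sigma_uniq : uniq (sigma_q A p q) by apply: filter_uniq.
have [z [zS zi0]] := affine_separation (filter_uniq _ sigma_uniq) apex.
have b_neq0 k : b 0 k != 0 by case: (hb k).
pose t i := a i * (affine_form z i)%:~R * monom b i.
have val_t i : i \in A -> affine_form z i != 0 ->
    t i != 0 /\ val (t i) = trop_term p i q.
  move=> iA zi; have [ai_neq0 val_ai] := ha i iA.
  have t_neq0 : t i != 0 by rewrite !mulf_neq0 ?(intr_neq0 hres) ?monom_neq0.
  split=> //; rewrite !valuationM ?mulf_neq0 ?(intr_neq0 hres) ?monom_neq0 //.
  rewrite (valuation_intr hval hres) // addr0 (valuation_monom hval i hb).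
  by rewrite val_ai.
have i0A : i0 \in A by move: i0_sigma; rewrite mem_filter => /andP [].
have [t0_neq0 t0_val] := val_t i0 i0A zi0.
have /eqP := affine_relation b_neq0 z hF hD; apply/negP.
rewrite (bigD1_seq i0) //= big_seq_cond.
apply: (addr_dominant_neq0 hval) => // i /andP [iA i_neq].
have [->|zi] := eqVneq (affine_form z i) 0; first by left; rewrite mulr0 mul0r.
right; have [_ ->] := val_t i iA zi; rewrite t0_val.
apply: (trop_term_lt_notin i0_sigma iA); apply: contra zi => i_sigma.
by apply/eqP/zS; rewrite mem_filter i_neq.
Qed.

Lemma aff_indep_apex (R : realType) (d : nat) (sigma : seq 'rV[int]_d)
    (i : 'rV[int]_d) :
  uniq sigma -> aff_indep R sigma -> i \in sigma ->
  ~ in_affine_span R [seq j <- sigma | j != i] i.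
Proof.
move=> sigma_uniq indep i_sigma [c [c_sum c_comb]].
pose c' s := if s == i then -1 else c s.
have split_sum (V : zmodType) (F : 'rV[int]_d -> R -> V) :
    \sum_(s <- sigma) F s (c' s) =
    F i (-1) + \sum_(s <- [seq j <- sigma | j != i]) F s (c s).
  rewrite (bigD1_seq i) //= /c' eqxx big_filter.
  by congr (_ + _); apply: eq_bigr => s /negbTE ->.
have : c' i = 0.
  apply: (indep c') i_sigma.
    by rewrite (split_sum _ (fun _ x => x)) c_sum addNr.
  by rewrite (split_sum _ (fun s x => x *: intvR R s)) -c_comb scaleN1r addNr.
by rewrite /c' eqxx => /eqP; rewrite oppr_eq0 oner_eq0.
Qed.

Theorem lemma3p1 (R : realType) (K : closedFieldType) (val : K -> R)
  (hval : is_nonarch_valuation val) (hchar : [pchar K] =i pred0)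
  (hres : residue_char0 val)
  (d : nat) (A : seq 'rV[int]_d) (hAuniq : uniq A) (hspan : Zspan_full A)
  (p : 'rV[int]_d -> R) :
  (forall q : 'rV[R]_d, in_trop_hyp A p q -> pyramid R (sigma_q A p q) ->
     ~ singular_point val A p q) /\
  (is_triangulation A p -> trop_nonsingular val A p).
Proof.
split=> [q _|htri q sing]; first exact: pyramid_not_singular.
have [[i [_ [i_sigma _ _]]] _] := sing.
apply: (pyramid_not_singular hval hres hAuniq _ sing).
exists i => //; apply: aff_indep_apex => //.
exact: filter_uniq.
Qed.
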